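(* For every $r$-configuration $F$ of $U$ and $V$, $\phi(\Phi(F))=F$. In particular, $\Phi$ is injective on $r$-configurations.
   Context: $n,r\ge1$, $m=rn$. $U=\{u_1\prec\cdots\prec u_n\}$, $V=\{v_1\prec\cdots\prec v_n\}$; $\overline U=U\times[r]$, $\overline V=V\times[r]$ ordered lexicographically (write $u^s$ for $(u,s)$). An $r$-configuration is a bijection between $\overline U$ and $\overline V$; a quasi configuration is a partial matching. Pairs $(\bar u,\bar v),(\bar u',\bar v')$ are noncrossing if ($\bar u\prec\bar u'$ and $\bar v\prec\bar v'$) or ($\bar u'\prec\bar u$ and $\bar v'\prec\bar v$). For an $r$-configuration $F$: $a_{\bar u}$ is the maximum size of a set of pairwise noncrossing pairs of $F$ containing the pair $(\bar u,\bar v')\in F$ at $\bar u$, all of whose pairs $(x,y)$ satisfy $x\preceq\bar u$, $y\preceq\bar v'$; $b_{\bar v}$ is defined symmetrically; $\Phi(F)=a_{u_1^1}\cdots a_{u_n^r}|b_{v_1^1}\cdots b_{v_n^r}$, the walk with steps $e_{a_{\bar u}}$ ($\bar u$ increasing) then $-e_{b_{\bar v}}$ ($\bar v$ increasing). For a walk $w=a_{u_1^1}\cdots a_{u_n^r}|b_{v_1^1}\cdots b_{v_n^r}$, $A_k(w)=\{\bar u:a_{\bar u}=k\}$, $B_k(w)=\{\bar v:b_{\bar v}=k\}$; connecting equal-size ordered sets $A,B$ in a crossing way means pairing the $i$-th smallest of $A$ with the $i$-th largest of $B$; $\phi(w)$ is the quasi configuration obtained by, for each $k$: if $|A_k(w)|\ge|B_k(w)|$,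 connecting the $|B_k(w)|$ smallest elements of $A_k(w)$ with $B_k(w)$ in a crossing way, otherwise connecting $A_k(w)$ with the $|A_k(w)|$ largest elements of $B_k(w)$ in a crossing way. *)

From mathcomp Require Import all_boot.
Set Implicit Arguments. Unset Strict Implicit. Unset Printing Implicit Defensive.

(* U = {u_1 < ... < u_n} is modelled by 'I_n (u_i = i-1), likewise V;
   Ubar = U x [r] and Vbar = V x [r] are modelled by 'I_n * 'I_r with the
   lexicographic order; (u, s) stands for u^s. *)
Definition bar (n r : nat) : finType := ('I_n * 'I_r)%type.

Definition lexlt n r (x y : bar n r) : bool :=
  (x.1 < y.1)%N || ((x.1 == y.1) && (x.2 < y.2)%N).
Definition lexle n r (x y : bar n r) : bool := (x == y) || lexlt x y.

Definition pair_t n r : finType := (bar n r * bar n r)%type.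

Definition noncrossing n r (p q : pair_t n r) : bool :=
  (lexlt p.1 q.1 && lexlt p.2 q.2) || (lexlt q.1 p.1 && lexlt q.2 p.2).

(* An r-configuration is a bijection F : Ubar -> Vbar; its set of pairs. *)
Definition graph n r (F : bar n r -> bar n r) : {set pair_t n r} :=
  [set p | F p.1 == p.2].

Definition admissible n r (F : bar n r -> bar n r) (p0 : pair_t n r)
    (S : {set pair_t n r}) : bool :=
  [&& S \subset graph F, p0 \in S,
      [forall p in S, forall q in S, (p != q) ==> noncrossing p q] &
      [forall p in S, lexle p.1 p0.1 && lexle p.2 p0.2]].

Definition acoef n r (F : bar n r -> bar n r) (u : bar n r) : nat :=
  \max_(S : {set pair_t n r} | admissible F (u, F u) S) #|S|.

Definition bcoef n r (F : bar n r -> bar n r) (v : bar n r) : nat :=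
  \max_(S : {set pair_t n r} |
          [exists u, (F u == v) && admissible F (u, v) S]) #|S|.

(* A walk a_{u_1^1} ... a_{u_n^r} | b_{v_1^1} ... b_{v_n^r}, stored as the
   pair of its labels indexed by Ubar and Vbar (in increasing order). *)
Definition walk n r : Type := ({ffun bar n r -> nat} * {ffun bar n r -> nat})%type.

Definition Phi n r (F : bar n r -> bar n r) : walk n r :=
  ([ffun u => acoef F u], [ffun v => bcoef F v]).

Definition Ak n r (w : walk n r) (k : nat) : {set bar n r} := [set u | w.1 u == k].
Definition Bk n r (w : walk n r) (k : nat) : {set bar n r} := [set v | w.2 v == k].

(* x is the i-th smallest element of A (0-based) iff rank_lo A x = i;
   y is the i-th largest element of B (0-based) iff rank_hi B y = i. *)
Definition rank_lo n r (A : {set bar n r}) (x : bar n r) : nat :=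
  #|[set y in A | lexlt y x]|.
Definition rank_hi n r (B : {set bar n r}) (y : bar n r) : nat :=
  #|[set z in B | lexlt y z]|.

Definition conn_k n r (w : walk n r) (k : nat) (p : pair_t n r) : bool :=
  let A := Ak w k in let B := Bk w k in
  [&& p.1 \in A, p.2 \in B &
    if (#|B| <= #|A|)%N then
      (* |B| smallest elements of A connected with B in a crossing way *)
      (rank_lo A p.1 < #|B|)%N && (rank_lo A p.1 == rank_hi B p.2)
    else
      (* A connected with the |A| largest elements of B in a crossing way *)
      (rank_hi B p.2 < #|A|)%N && (rank_lo A p.1 == rank_hi B p.2)].

(* phi(w): union over k of the pairs created for k.  For k larger than every
   a-label, A_k is empty and no pair is created, so the union may be taken over
   k <= max_u a_u. *)
Definition phi n r (w : walk n r) : {set pair_t n r} :=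
  \bigcup_(k < (\max_(u : bar n r) w.1 u).+1) [set p | conn_k w k p].

From mathcomp Require Import all_boot zify.
Set Implicit Arguments. Unset Strict Implicit.

(* Adding the pair at u' to a chain certifying a_u shows that a_u < a_u'
   whenever the pairs at u and u' are noncrossing with u < u'.  Hence on a
   level set A_k of the labels the configuration F is order-reversing, and
   B_k = F(A_k): the i-th smallest element of A_k is matched by F with the
   i-th largest element of B_k, which is exactly the pairing made by phi. *)

Section LexOrder.
Variables n r : nat.
Implicit Types (x y z : bar n r) (A : {set bar n r}).

Lemma lexltE x y :
  lexlt x y = (x.1 < y.1)%N || ((x.1 == y.1 :> nat) && (x.2 < y.2)%N).
Proof. by []. Qed.

Lemma lexlt_irr x : lexlt x x = false.
Proof. rewrite lexltE; lia. Qed.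

Lemma lexlt_trans x y z : lexlt x y -> lexlt y z -> lexlt x z.
Proof. rewrite !lexltE; lia. Qed.

Lemma lexlt_asym x y : lexlt x y -> lexlt y x = false.
Proof. rewrite !lexltE; lia. Qed.

Lemma lexle_lt_trans x y z : lexle x y -> lexlt y z -> lexlt x z.
Proof. by rewrite /lexle => /orP[/eqP->|]//; apply: lexlt_trans. Qed.

Lemma lexlt_total x y : x != y -> lexlt x y || lexlt y x.
Proof.
case: x y => [a b] [c d] neq; rewrite !lexltE /=.
have : (a != c :> nat) || (b != d :> nat).
  apply: contraR neq; rewrite negb_or !negbK => /andP[/eqP ac /eqP bd].
  by rewrite (val_inj ac) (val_inj bd).
lia.
Qed.

Lemma lexlt_trichotomy x y : [|| x == y, lexlt x y | lexlt y x].
Proof. by case: eqVneq => //= /lexlt_total. Qed.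

Lemma rank_lo_lt A x : x \in A -> (rank_lo A x < #|A|)%N.
Proof.
move=> Ax; apply: proper_card; apply/properP; split.
  by apply/subsetP => z; rewrite inE => /andP[].
by exists x => //; rewrite inE lexlt_irr andbF.
Qed.

Lemma rank_lo_mono A x y : x \in A -> lexlt x y -> (rank_lo A x < rank_lo A y)%N.
Proof.
move=> Ax lt_xy; apply: proper_card; apply/properP; split.
  by apply/subsetP => z; rewrite !inE => /andP[-> /lexlt_trans->].
by exists x; rewrite !inE ?Ax ?lt_xy // lexlt_irr andbF.
Qed.

Lemma rank_lo_inj A : {in A &, injective (rank_lo A)}.
Proof.
move=> x y Ax Ay eq_rk; have /or3P[/eqP //|lt|lt] := lexlt_trichotomy x y.
  by have := rank_lo_mono Ax lt; rewrite eq_rk ltnn.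
by have := rank_lo_mono Ay lt; rewrite eq_rk ltnn.
Qed.

Lemma rank_hi_imset (f : bar n r -> bar n r) A x :
    injective f -> {in A &, forall y z, lexlt (f y) (f z) = lexlt z y} ->
  x \in A -> rank_hi (f @: A) (f x) = rank_lo A x.
Proof.
move=> f_inj f_anti Ax; rewrite /rank_hi /rank_lo -[RHS](card_imset _ f_inj).
apply: eq_card => z; apply/idP/imsetP => [|[y + ->]].
  rewrite inE => /andP[/imsetP[y Ay ->]]; rewrite f_anti // => lt.
  by exists y; rewrite ?inE ?Ay.
by rewrite !inE => /andP[Ay lt]; rewrite imset_f // f_anti.
Qed.

End LexOrder.

Section Coefficients.
Variables n r : nat.
Variable F : bar n r -> bar n r.

Lemma admissible_pair u : admissible F (u, F u) [set (u, F u)].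
Proof.
apply/and4P; split.
- by apply/subsetP => p; rewrite !inE => /eqP->.
- exact: set11.
- by apply/forall_inP => p /set1P->; apply/forall_inP => q /set1P->; rewrite eqxx.
- by apply/forall_inP => p /set1P->; rewrite /lexle !eqxx.
Qed.

Lemma acoef_max u : exists2 S, admissible F (u, F u) S & acoef F u = #|S|.
Proof.
have ex_adm : (0 < #|(fun S : {set pair_t n r} => admissible F (u, F u) S)|)%N.
  by apply/card_gt0P; exists [set (u, F u)]; apply: admissible_pair.
rewrite /acoef.
by have [S admS ->] := eq_bigmax_cond (fun S : {set pair_t n r} => #|S|) ex_adm; exists S.
Qed.

Lemma acoef_ge u S : admissible F (u, F u) S -> (#|S| <= acoef F u)%N.
Proof. by move=> admS; rewrite /acoef (bigD1 S admS) leq_maxl. Qed.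

Lemma admissible_below p0 S p :
  admissible F p0 S -> p \in S -> lexle p.1 p0.1 && lexle p.2 p0.2.
Proof. by case/and4P=> _ _ _ /forall_inP; apply. Qed.

Lemma admissible_extend u u' S :
    lexlt u u' -> lexlt (F u) (F u') -> admissible F (u, F u) S ->
  admissible F (u', F u') ((u', F u') |: S).
Proof.
move=> lt_u lt_Fu admS; have /and4P[sub_S _ nc_S _] := admS.
have below p : p \in S -> lexlt p.1 u' && lexlt p.2 (F u').
  move/(admissible_below admS)=> /andP[le1 le2].
  by rewrite (lexle_lt_trans le1) ?(lexle_lt_trans le2).
apply/and4P; split.
- by rewrite subUset sub_S sub1set inE eqxx.
- exact: setU11.
- apply/forall_inP => p /setU1P[->|Sp]; apply/forall_inP => q /setU1P[->|Sq].
  + by rewrite eqxx.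
  + by rewrite /noncrossing below ?orbT ?implybT.
  + by rewrite /noncrossing below ?implybT.
  + exact: (forall_inP (forall_inP nc_S p Sp) q Sq).
- apply/forall_inP => p /setU1P[->|/below/andP[lt1 lt2]]; first by rewrite /lexle !eqxx.
  by rewrite /lexle lt1 lt2 !orbT.
Qed.

Lemma acoef_mono u u' :
  lexlt u u' -> lexlt (F u) (F u') -> (acoef F u < acoef F u')%N.
Proof.
move=> lt_u lt_Fu; have [S admS ->] := acoef_max u.
have notin_S : (u', F u') \notin S.
  apply/negP => /(admissible_below admS) /andP[le1 _].
  by have := lexle_lt_trans le1 lt_u; rewrite lexlt_irr.
apply: leq_trans (acoef_ge (admissible_extend lt_u lt_Fu admS)).
by rewrite cardsU1 notin_S.
Qed.

Lemma acoef_level_anti u u' :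
  acoef F u = acoef F u' -> lexlt (F u) (F u') -> lexlt u' u.
Proof.
move=> eq_a lt_Fu; have /or3P[/eqP eq_u|lt|//] := lexlt_trichotomy u u'.
  by move: lt_Fu; rewrite eq_u lexlt_irr.
by have := acoef_mono lt lt_Fu; rewrite eq_a ltnn.
Qed.

End Coefficients.

Section Bijection.
Variables n r : nat.
Variable F : bar n r -> bar n r.
Hypothesis F_bij : bijective F.

Notation A k := (Ak (Phi F) k).
Notation B k := (Bk (Phi F) k).

Lemma inAk k u : (u \in A k) = (acoef F u == k).
Proof. by rewrite inE ffunE. Qed.

Lemma bcoefE u : bcoef F (F u) = acoef F u.
Proof.
rewrite /bcoef /acoef; apply: eq_bigl => S; apply/existsP/idP => [[u']|adm].
  by case/andP=> /eqP/(bij_inj F_bij)->.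
by exists u; rewrite eqxx.
Qed.

Lemma Bk_imset k : B k = F @: A k.
Proof.
have [g FK gK] := F_bij; apply/setP => v; rewrite -[v]gK inE ffunE bcoefE -inAk.
by rewrite mem_imset //; apply: bij_inj.
Qed.

Lemma level_anti k : {in A k &, forall u u', lexlt (F u) (F u') = lexlt u' u}.
Proof.
move=> u u'; rewrite !inAk => /eqP au /eqP au'.
have eq_a : acoef F u = acoef F u' by rewrite au au'.
apply/idP/idP => [/(acoef_level_anti eq_a)//|lt].
have neq : F u != F u' by apply: contraTneq lt => /(bij_inj F_bij)->; rewrite lexlt_irr.
case/orP: (lexlt_total neq) => // /(acoef_level_anti (esym eq_a)).
by rewrite (lexlt_asym lt).
Qed.

Lemma rank_hi_Bk k u : u \in A k -> rank_hi (B k) (F u) = rank_lo (A k) u.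
Proof. by rewrite Bk_imset; apply: rank_hi_imset (bij_inj F_bij) (@level_anti k). Qed.

Lemma phi_Phi : phi (Phi F) = graph F.
Proof.
apply/setP => -[x y]; rewrite [RHS]inE /=.
apply/bigcupP/eqP => [[k _]|<-].
  rewrite inE /conn_k /= Bk_imset card_imset ?leqnn /=; last exact: bij_inj.
  case/and3P=> Ax /imsetP[u Au ->] /andP[_ /eqP eq_rk].
  by rewrite -Bk_imset rank_hi_Bk // in eq_rk; rewrite (rank_lo_inj Ax Au eq_rk).
have lt_k : (acoef F x < (\max_(u : bar n r) (Phi F).1 u).+1)%N.
  by rewrite ltnS; apply: leq_trans (leq_bigmax x); rewrite ffunE.
have Ax : x \in A (acoef F x) by rewrite inAk.
exists (Ordinal lt_k) => //; rewrite inE /conn_k /= Ax rank_hi_Bk // eqxx andbT.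
by rewrite Bk_imset card_imset ?leqnn ?imset_f ?rank_lo_lt //; apply: bij_inj.
Qed.

End Bijection.

Lemma graph_inj n r (F G : bar n r -> bar n r) : graph F = graph G -> F =1 G.
Proof.
move=> eq_g x; have : (x, F x) \in graph G by rewrite -eq_g inE.
by rewrite inE => /eqP.
Qed.

Theorem lemma5 (n r : nat) (n_gt0 : (0 < n)%N) (r_gt0 : (0 < r)%N) :
  (forall F : bar n r -> bar n r, bijective F -> phi (Phi F) = graph F) /\
  (forall F G : bar n r -> bar n r, bijective F -> bijective G ->
     Phi F = Phi G -> F =1 G).
Proof.
split=> [F|F G F_bij G_bij eq_Phi]; first exact: phi_Phi.
by apply: graph_inj; rewrite -(phi_Phi F_bij) -(phi_Phi G_bij) eq_Phi.
Qed.
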